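(* Let $d_2=1$ and assume Assumptions 1 and 2. Then $$\sum_{n=1}^N\big(\hat p(\hat x_n,\hat y_n)-p^*_{\theta_*}(\hat x_n,\hat y_n)\big)^2\ \le\ \frac{Nx_{\max}^2y_{\max}^2}{y_{\min}^2\,\lambda_{\min}(\mathbb E[xx^\top])}\,\mathbb E_{x,y}\big[(\hat p(x,y)-p^*_{\theta_*}(x,y))^2\big],$$ where $(x,y)$ is distributed as an online feature.
   Context: Online features $(x,y)\in\mathcal X\times\mathcal Y\subset\mathbb R^{d_1}\times\mathbb R$ (here $d_2=1$), unknown online parameter $\theta_*=(\alpha_*,\beta_* )\in\Theta^\dagger$. Offline features and prices $\{(\hat x_n,\hat y_n,\hat p_n)\}_{n=1}^N$ with $(\hat x_n,\hat y_n)\in\mathcal X\times\mathcal Y$. $p^*_\theta(x,y)=\arg\max_{p\ge0}p(\alpha^\top x+\beta yp)$. Assumption 1: $\Theta^\dagger$, $\mathcal X\times\mathcal Y$ compact with $\|\alpha\|\le\alpha_{\max},|\beta|\le\beta_{\max},\|x\|\le x_{\max},|y|\le y_{\max}$; $\mathbb E[xx^\top]$ and $\mathbb E[y^2]$ positive; positive constants with $l_\alpha\le\alpha^\top x\le u_\alpha$, $l_\beta\le-\beta y\le u_\beta$ for all $(\alpha,\beta)\in\Theta^\dagger,(x,y)\in\mathcal X\times\mathcal Y$; hence $p^*_\theta(x,y)=-\alpha^\top x/(2\beta y)$ and $|y|\ge y_{\min}>0$ on $\mathcal Y$. Assumption 2: $\hat\Sigma_{x,x}=\sum_n\hat x_n\hat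 x_n^\top$ satisfies $\lambda_{\min}(\hat\Sigma_{x,x})\ge cN$ for some $c>0$. Define $\hat A=\hat\Sigma_{x,x}^{-1}\sum_n\hat x_n\hat y_n\hat p_n\in\mathbb R^{d_1}$ and $\hat p(x,y)=\hat A^\top x/y$. *)

From HB Require Import structures.
From mathcomp Require Import all_boot all_order all_algebra.
From mathcomp Require Import all_classical all_reals all_analysis.
Set Implicit Arguments. Unset Strict Implicit. Unset Printing Implicit Defensive.
Import Order.TTheory GRing.Theory Num.Theory.
Import numFieldNormedType.Exports.
Local Open Scope ring_scope.
Local Open Scope classical_set_scope.

Section Defs.
Variable R : realType.

Definition dotv (d : nat) (u v : 'rV[R]_d) : R := \sum_(i < d) u 0 i * v 0 i.
Definition enorm (d : nat) (u : 'rV[R]_d) : R := Num.sqrt (dotv u u).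

Definition lambda_min (d : nat) (M : 'M[R]_d) : R := inf [set a : R | eigenvalue M a].

(* optimal price p*_theta(x,y) = -alpha^T x / (2 beta y), theta = (alpha, beta) *)
Definition pstar (d : nat) (th : 'rV[R]_d * R) (x : 'rV[R]_d) (y : R) : R :=
  - dotv th.1 x / (2 * th.2 * y).

Definition Sigma_hat (d N : nat) (xh : 'I_N -> 'rV[R]_d) : 'M[R]_d :=
  \sum_(n < N) (xh n)^T *m xh n.

Definition A_hat (d N : nat) (xh : 'I_N -> 'rV[R]_d) (yh ph : 'I_N -> R) : 'cV[R]_d :=
  invmx (Sigma_hat xh) *m (\sum_(n < N) (yh n * ph n) *: (xh n)^T).

Definition p_hat (d N : nat) (xh : 'I_N -> 'rV[R]_d) (yh ph : 'I_N -> R)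
  (x : 'rV[R]_d) (y : R) : R := (x *m A_hat xh yh ph) 0 0 / y.

Definition Exx (dT : measure_display) (T : measurableType dT) (P : probability T R)
  (d : nat) (x : T -> 'rV[R]_d) : 'M[R]_d :=
  \matrix_(i, j) fine (\int[P]_t (x t 0 i * x t 0 j)%:E).

End Defs.

From HB Require Import structures.
From mathcomp Require Import all_boot all_order all_algebra.
From mathcomp Require Import all_classical all_reals all_analysis.
From mathcomp Require Import measurable_realfun ring lra.
Set Implicit Arguments. Unset Strict Implicit. Unset Printing Implicit Defensive.
Import Order.TTheory GRing.Theory Num.Theory.
Import numFieldNormedType.Exports.
Local Open Scope ring_scope.
Local Open Scope classical_set_scope.

(* With w = A_hat + alpha / (2 beta), every price gap is p_hat(x, y) - pstar(x, y) = <w, x> / y.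
   By Cauchy-Schwarz and |y| >= y_min each offline term is at most |w|^2 x_max^2 / y_min^2.
   Online, |y| <= y_max gives E[(p_hat - pstar)^2] >= w^T E[x x^T] w / y_max^2, and the Rayleigh
   bound w^T E[x x^T] w >= lambda_min(E[x x^T]) |w|^2 connects the two sides. *)

Lemma linear_coef_eq0 (R : realFieldType) (b c : R) :
  (forall t, 0 <= 2 * t * b + t ^+ 2 * c) -> b = 0.
Proof.
move=> ge0; pose k := `|c| + 1.
have k_gt0 : 0 < k by rewrite ltr_pwDr.
have ck : c - 2 * k < 0.
  by have := ler_norm c; have := normr_ge0 c; rewrite /k => ? ?; lra.
have : 0 <= b ^+ 2 * (c - 2 * k).
  have -> : b ^+ 2 * (c - 2 * k) = k ^+ 2 * (2 * (- b / k) * b + (- b / k) ^+ 2 * c).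
    by field; rewrite gt_eqF.
  by rewrite mulr_ge0 ?sqr_ge0.
rewrite nmulr_lge0 // => b2_le0.
by apply/eqP; rewrite -sqrf_eq0 eq_le b2_le0 sqr_ge0.
Qed.

Lemma sqr_le_of_le_norm (R : realDomainType) (a b : R) :
  0 <= a -> a <= `|b| -> a ^+ 2 <= b ^+ 2.
Proof.
by move=> a_ge0 ab; rewrite -(real_normK (num_real b)) lerXn2r ?nnegrE ?normr_ge0.
Qed.

Lemma sqr_le_of_norm_le (R : realDomainType) (a b : R) : `|a| <= b -> a ^+ 2 <= b ^+ 2.
Proof.
move=> ab; rewrite -(real_normK (num_real a)) lerXn2r ?nnegrE ?normr_ge0 //.
exact: le_trans (normr_ge0 a) ab.
Qed.

Section RowVectors.
Variables (R : realType) (d : nat).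
Implicit Types (u v w : 'rV[R]_d) (M : 'M[R]_d).

Definition mxform M u v : R := (u *m M *m v^T) 0 0.

Lemma mxformE M u v : mxform M u v = \sum_i \sum_j u 0 i * M i j * v 0 j.
Proof.
rewrite /mxform mxE exchange_big /=; apply: eq_bigr => j _.
by rewrite !mxE mulr_suml; apply: eq_bigr.
Qed.

Lemma dotv_mxform u v : dotv u v = mxform 1%:M u v.
Proof. by rewrite /mxform mulmx1 /dotv mxE; apply: eq_bigr => i _; rewrite mxE. Qed.

Lemma mxformDl M u v w : mxform M (u + v) w = mxform M u w + mxform M v w.
Proof. by rewrite /mxform !mulmxDl mxE. Qed.

Lemma mxformDr M u v w : mxform M w (u + v) = mxform M w u + mxform M w v.
Proof. by rewrite /mxform linearD /= mulmxDr mxE. Qed.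

Lemma mxformZl M (a : R) u w : mxform M (a *: u) w = a * mxform M u w.
Proof. by rewrite /mxform -!scalemxAl mxE. Qed.

Lemma mxformZr M (a : R) u w : mxform M w (a *: u) = a * mxform M w u.
Proof. by rewrite /mxform linearZ /= -scalemxAr mxE. Qed.

Lemma mxform0l M u : mxform M 0 u = 0.
Proof. by rewrite /mxform !mul0mx mxE. Qed.

Lemma mxformC M u v : M^T = M -> mxform M u v = mxform M v u.
Proof.
move=> sM; have -> : mxform M u v = (u *m M *m v^T)^T 0 0 by rewrite mxE.
by rewrite !trmx_mul trmxK sM mulmxA.
Qed.

Lemma mxformBscalar M (a : R) u v :
  mxform (M - a%:M) u v = mxform M u v - a * dotv u v.
Proof.
rewrite dotv_mxform /mxform mulmxBr mulmxBl mul_mx_scalar -scalemxAl mulmx1.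
by rewrite [LHS]mxE !mxE.
Qed.

Lemma continuous_mxform M : continuous (fun u => mxform M u u).
Proof.
have -> : (fun u => mxform M u u) = fun u => \sum_i \sum_j u 0 i * M i j * u 0 j.
  by apply/funext => u; rewrite mxformE.
apply: continuous_big => [|i _]; first exact: add_continuous.
apply: continuous_big => [|j _]; first exact: add_continuous.
move=> u; apply: (@continuousM _ _ (fun u => u 0 i * M i j) (fun u => u 0 j)).
  apply: (@continuousM _ _ (fun u => u 0 i) (fun=> M i j)).
    exact: coord_continuous.
  exact: cst_continuous.
exact: coord_continuous.
Qed.

Lemma dotvC u v : dotv u v = dotv v u.
Proof. by rewrite !dotv_mxform mxformC // tr_scalar_mx. Qed.

Lemma dotv_ge0 u : 0 <= dotv u u.
Proof. by apply: sumr_ge0 => i _; rewrite -expr2 sqr_ge0. Qed.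

Lemma sqr_coord_le_dotv u i : u 0 i ^+ 2 <= dotv u u.
Proof.
rewrite /dotv (bigD1 i) //= -expr2 lerDl.
by apply: sumr_ge0 => j _; rewrite -expr2 sqr_ge0.
Qed.

Lemma norm_coord_le_enorm u i : `|u 0 i| <= enorm u.
Proof.
rewrite -ler_sqr ?nnegrE ?normr_ge0 ?sqrtr_ge0 // real_normK ?num_real //.
by rewrite sqr_sqrtr ?dotv_ge0 // sqr_coord_le_dotv.
Qed.

Lemma dotv_le_sqr_enorm u r : enorm u <= r -> dotv u u <= r ^+ 2.
Proof.
by move=> ur; rewrite -(sqr_sqrtr (dotv_ge0 u)) sqr_le_of_norm_le // ger0_norm ?sqrtr_ge0.
Qed.

Lemma dotv_gt0 u : u != 0 -> 0 < dotv u u.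
Proof.
move=> /eqP u0; rewrite lt_def dotv_ge0 andbT; apply: contra_notN u0 => /eqP u00.
apply/rowP => i; rewrite mxE; apply/eqP; rewrite -sqrf_eq0 eq_le sqr_ge0 andbT.
by rewrite -u00 sqr_coord_le_dotv.
Qed.

Lemma dotv_CauchySchwarz u v : dotv u v ^+ 2 <= dotv u u * dotv v v.
Proof.
have [->|u0] := eqVneq u 0; first by rewrite !dotv_mxform !mxform0l expr2 !mul0r.
have a_gt0 := dotv_gt0 u0.
have := dotv_ge0 (dotv u u *: v + (- dotv u v) *: u).
rewrite !dotv_mxform mxformDl !mxformDr !mxformZl !mxformZr -!dotv_mxform (dotvC v u).
move: a_gt0; set a := dotv u u; set b := dotv u v; set c := dotv v v; nra.
Qed.

Definition unit_sphere : set 'rV[R]_d := [set u | dotv u u = 1].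

Lemma compact_unit_sphere : compact unit_sphere.
Proof.
have cube := rV_compact (fun _ : 'I_d => @segment_compact R (-1) 1).
apply: (subclosed_compact _ cube).
  apply: (@preimage_closed _ _ (fun u => dotv u u) [set 1]); last exact: closed_eq.
  by move=> u _; under eq_fun do rewrite dotv_mxform; exact: continuous_mxform.
move=> u Su i /=; have := sqr_coord_le_dotv u i; rewrite Su => h.
by rewrite in_itv /=; apply/andP; split; nra.
Qed.

Lemma unit_sphere_normalize u :
  u != 0 -> unit_sphere ((Num.sqrt (dotv u u))^-1 *: u).
Proof.
move=> /dotv_gt0 u_gt0; rewrite /unit_sphere /= !dotv_mxform mxformZl mxformZr.
by rewrite mulrA -expr2 -dotv_mxform exprVn sqr_sqrtr ?ltW // mulVf ?gt_eqF.
Qed.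

Lemma mxform_ge_on_unit_sphere M (m : R) :
  (forall u, unit_sphere u -> m <= mxform M u u) ->
  forall u, m * dotv u u <= mxform M u u.
Proof.
move=> m_le u; have [->|u0] := eqVneq u 0.
  by rewrite dotv_mxform !mxform0l mulr0.
set s := (Num.sqrt (dotv u u))^-1.
have s2 : s ^+ 2 * dotv u u = 1.
  by rewrite exprVn sqr_sqrtr ?dotv_ge0 // mulVf ?gt_eqF ?dotv_gt0.
have := m_le _ (unit_sphere_normalize u0); rewrite -/s mxformZl mxformZr mulrA -expr2.
by move/(ler_wpM2r (dotv_ge0 u)); rewrite mulrAC s2 mul1r.
Qed.

Lemma exists_unit_sphere_minimizer M : unit_sphere !=set0 ->
  exists2 u0, unit_sphere u0 & forall u, mxform M u0 u0 * dotv u u <= mxform M u u.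
Proof.
move=> S0; have [u0 /set_mem Su0 u0_min] :=
  compact_EVT_min S0 compact_unit_sphere (continuous_subspaceT (@continuous_mxform M)).
by exists u0 => //; apply: mxform_ge_on_unit_sphere => u /mem_set /u0_min.
Qed.

Lemma unit_sphere_minimizer_eigenvalue M u0 : M^T = M -> unit_sphere u0 ->
  (forall u, mxform M u0 u0 * dotv u u <= mxform M u u) ->
  eigenvalue M (mxform M u0 u0).
Proof.
move=> sM Su0 u0_min; set mu := mxform M u0 u0.
pose B := M - mu%:M; pose r := u0 *m B.
have sB : B^T = B by rewrite /B linearB /= sM tr_scalar_mx.
have B_ge0 u : 0 <= mxform B u u by rewrite mxformBscalar subr_ge0.
have Bu0 w : mxform B u0 w = dotv r w by rewrite dotv_mxform /mxform mulmx1.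
have Bu0u0 : mxform B u0 u0 = 0.
  by rewrite mxformBscalar -/mu [dotv _ _]Su0 mulr1 subrr.
(* B is positive semidefinite and vanishes at u0, hence u0 B = 0 *)
have r0 : dotv r r = 0.
  rewrite -Bu0; apply: (@linear_coef_eq0 _ _ (mxform B r r)) => t.
  have := B_ge0 (u0 + t *: r).
  rewrite mxformDl !mxformDr !mxformZl !mxformZr Bu0u0 (mxformC _ _ sB).
  by congr (0 <= _); ring.
apply/eigenvalueP; exists u0.
  apply/eqP; rewrite -subr_eq0 -mul_mx_scalar -mulmxBr -/B -/r.
  by apply: contra_eqT r0 => /dotv_gt0 /gt_eqF ->.
by apply: contra_eqN Su0 => /eqP ->; rewrite dotv_mxform mxform0l (@eq_sym _ 0) oner_eq0.
Qed.

Lemma lambda_min_mxform M v : M^T = M -> lambda_min M * dotv v v <= mxform M v v.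
Proof.
move=> sM; have [->|v0] := eqVneq v 0.
  by rewrite dotv_mxform !mxform0l mulr0.
have [u0 Su0 u0_min] := exists_unit_sphere_minimizer M (ex_intro _ _ (unit_sphere_normalize v0)).
set mu := mxform M u0 u0 in u0_min.
have mu_lb a : eigenvalue M a -> mu <= a.
  move=> /eigenvalueP[u uM u_neq0]; have := u0_min u.
  have -> : mxform M u u = a * dotv u u.
    by rewrite dotv_mxform /mxform mulmx1 uM -scalemxAl mxE.
  by rewrite ler_pM2r ?dotv_gt0.
have lambda_le_mu : lambda_min M <= mu.
  apply: ge_inf; first by exists mu => a /mu_lb.
  exact: unit_sphere_minimizer_eigenvalue.
by apply: le_trans (u0_min v); rewrite ler_wpM2r ?dotv_ge0.
Qed.

Lemma sqr_dotv_div_le w u (y X Y : R) :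
  dotv u u <= X -> 0 < Y -> Y <= y ^+ 2 -> (dotv w u / y) ^+ 2 <= dotv w w * X / Y.
Proof.
move=> uX Y_gt0 Yy; have y2_gt0 : 0 < y ^+ 2 := lt_le_trans Y_gt0 Yy.
rewrite expr_div_n; apply: (@le_trans _ _ (dotv w u ^+ 2 / Y)).
  by apply: ler_wpM2l; rewrite ?sqr_ge0 // lef_pV2 ?posrE.
rewrite ler_pM2r ?invr_gt0 //; apply: le_trans (dotv_CauchySchwarz w u) _.
by apply: ler_wpM2l; rewrite ?dotv_ge0.
Qed.

Lemma sum_sqr_dotv_div_le n w (u : 'I_n -> 'rV[R]_d) (y : 'I_n -> R) (X Y : R) :
  (forall i, dotv (u i) (u i) <= X) -> 0 < Y -> (forall i, Y <= y i ^+ 2) ->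
  \sum_i (dotv w (u i) / y i) ^+ 2 <= n%:R * (dotv w w * X / Y).
Proof.
move=> uX Y_gt0 Yy; rewrite -[n in n%:R]card_ord mulr_natl -sumr_const.
by apply: ler_sum => i _; exact: sqr_dotv_div_le.
Qed.

End RowVectors.

Lemma p_hat_sub_pstar (R : realType) d N (xh : 'I_N -> 'rV[R]_d) (yh ph : 'I_N -> R)
    (th : 'rV[R]_d * R) (u : 'rV[R]_d) (v : R) :
  p_hat xh yh ph u v - pstar th u v
  = dotv ((A_hat xh yh ph)^T + (2 * th.2)^-1 *: th.1) u / v.
Proof.
rewrite /p_hat /pstar.
have -> : (u *m A_hat xh yh ph) 0 0 = dotv (A_hat xh yh ph)^T u.
  by rewrite dotvC dotv_mxform /mxform mulmx1 trmxK.
rewrite [in RHS]dotv_mxform mxformDl mxformZl -!dotv_mxform invfM.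
by ring.
Qed.

Lemma measurable_inv (R : realType) : measurable_fun setT (@GRing.inv R).
Proof.
have -> : [set: R] = [set x | x != 0] `|` [set 0].
  by apply/seteqP; split => x //= _; case: (eqVneq x 0); [right | left].
have mD : measurable [set x : R | x != 0] by exact: open_measurable (@open_neq R 0).
apply/(measurable_funU _ mD (measurable_set1 0)); split; last exact: measurable_fun_set1.
apply: open_continuous_measurable_fun; first exact: open_neq.
by move=> x /set_mem /= x0; exact: inv_continuous.
Qed.

Lemma probability_inhabited (R : realType) (dT : measure_display)
  (T : measurableType dT) (P : probability T R) : exists t : T, True.
Proof.
apply: contrapT => T0; have : P setT = 0%E.
  by rewrite (_ : setT = set0) ?measure0 //; apply/seteqP; split => t // _; apply: T0; exists t.
by rewrite probability_setT => /eqP; rewrite eqe oner_eq0.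
Qed.

Section SecondMoment.
Variables (R : realType) (dT : measure_display) (T : measurableType dT).
Variables (P : probability T R) (d : nat) (x : T -> 'rV[R]_d) (K : R).
Hypothesis x_measurable : forall i, measurable_fun setT (fun t => x t 0 i).
Hypothesis x_bounded : forall t i, `|x t 0 i| <= K.

Lemma Exx_sym : (Exx P x)^T = Exx P x.
Proof.
by apply/matrixP => i j; rewrite !mxE; congr fine; apply: eq_integral => t _; rewrite mulrC.
Qed.

Lemma measurable_dotv w : measurable_fun setT (fun t => dotv w (x t)).
Proof. by apply: measurable_sum => i; apply: measurable_funM. Qed.

Lemma integrable_coord_mul i j : P.-integrable setT (fun t => (x t 0 i * x t 0 j)%:E).
Proof.
apply: (measurable_bounded_integrable (f := fun t => x t 0 i * x t 0 j)) => //.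
- by rewrite [X in (X < _)%E]probability_setT ltry.
- exact: measurable_funM.
exists (K * K); split; first exact: num_real.
by move=> k Kk t _ /=; apply: le_trans (ltW Kk); rewrite normrM ler_pM.
Qed.

Lemma integral_sqr_dotv w :
  (\int[P]_t ((dotv w (x t)) ^+ 2)%:E = (mxform (Exx P x) w w)%:E)%E.
Proof.
have mT : measurable [set: T] := measurableT.
have int_ij i j := integrable_coord_mul i j.
have sqr_dotvE t : ((dotv w (x t)) ^+ 2)%:E
    = (\sum_i \sum_j (w 0 i * w 0 j)%:E * (x t 0 i * x t 0 j)%:E)%E.
  rewrite expr2 /dotv mulr_suml -sumEFin; apply: eq_bigr => i _.
  rewrite mulr_sumr -sumEFin; apply: eq_bigr => j _; rewrite -EFinM; congr EFin; ring.
under eq_integral do rewrite sqr_dotvE.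
rewrite integral_sum //; last first.
  by move=> i; apply: integrable_sum => // j _; apply: integrableZl.
rewrite mxformE -sumEFin; apply: eq_bigr => i _.
rewrite integral_sum //; last by move=> j; apply: integrableZl.
rewrite -sumEFin; apply: eq_bigr => j _; rewrite integralZl //.
by rewrite -(fineK (integrable_fin_num mT (int_ij i j))) -EFinM mxE mulrAC.
Qed.

Lemma lambda_min_Exx_le_integral w :
  ((lambda_min (Exx P x) * dotv w w)%:E <= \int[P]_t ((dotv w (x t)) ^+ 2)%:E)%E.
Proof. by rewrite integral_sqr_dotv lee_fin lambda_min_mxform // Exx_sym. Qed.

Lemma integral_sqr_dotv_div_ge w (y : T -> R) (Y : R) :
  measurable_fun setT y -> 0 < Y -> (forall t, 0 < y t ^+ 2) -> (forall t, y t ^+ 2 <= Y) ->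
  (Y^-1%:E * \int[P]_t ((dotv w (x t)) ^+ 2)%:E
   <= \int[P]_t ((dotv w (x t) / y t) ^+ 2)%:E)%E.
Proof.
move=> y_measurable Y_gt0 y2_gt0 y2_le; have Yinv_ge0 : 0 <= Y^-1 by rewrite invr_ge0 ltW.
have mT : measurable [set: T] := measurableT.
have m_dotv2 := measurable_funX 2 (measurable_dotv w).
have mE_dotv2 : measurable_fun setT (fun t => ((dotv w (x t)) ^+ 2)%:E).
  exact/measurable_EFinP.
have dotv2_ge0 t : setT t -> (0 <= ((dotv w (x t)) ^+ 2)%:E)%E.
  by rewrite lee_fin sqr_ge0.
rewrite -ge0_integralZl_EFin //.
apply: ge0_le_integral => //.
- by move=> t _; rewrite lee_fin mulr_ge0 ?sqr_ge0.
- by apply/measurable_EFinP; apply: measurable_funM.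
- apply/measurable_EFinP/measurable_funX/measurable_funM; first exact: measurable_dotv.
  exact: measurableT_comp (@measurable_inv R) y_measurable.
move=> t _; rewrite lee_fin expr_div_n mulrC; apply: ler_wpM2l; first exact: sqr_ge0.
by rewrite lef_pV2 ?posrE.
Qed.

Lemma lambda_min_Exx_le_integral_div w (y : T -> R) (Y : R) :
  measurable_fun setT y -> 0 < Y -> (forall t, 0 < y t ^+ 2) -> (forall t, y t ^+ 2 <= Y) ->
  ((Y^-1 * (lambda_min (Exx P x) * dotv w w))%:E
   <= \int[P]_t ((dotv w (x t) / y t) ^+ 2)%:E)%E.
Proof.
move=> y_measurable Y_gt0 y2_gt0 y2_le.
apply: le_trans (integral_sqr_dotv_div_ge w y_measurable Y_gt0 y2_gt0 y2_le).
rewrite EFinM; apply: lee_wpmul2l; first by rewrite lee_fin invr_ge0 ltW.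
exact: lambda_min_Exx_le_integral.
Qed.

End SecondMoment.

Unset Implicit Arguments.

Theorem lemmaD10 (R : realType) (dT : measure_display) (T : measurableType dT)
  (P : probability T R) (d N : nat)
  (x : T -> 'rV[R]_d) (y : T -> R)
  (Theta XY : set ('rV[R]_d * R)) (th : 'rV[R]_d * R)
  (xh : 'I_N -> 'rV[R]_d) (yh ph : 'I_N -> R)
  (amax bmax xmax ymax ymin la ua lb ub c : R) :
  (* Assumption 1 *)
  compact Theta -> compact XY ->
  th \in Theta ->
  (forall z, z \in Theta -> enorm z.1 <= amax /\ `|z.2| <= bmax) ->
  (forall z, z \in XY -> enorm z.1 <= xmax /\ `|z.2| <= ymax) ->
  (forall i, measurable_fun setT (fun t => x t 0 i)) ->
  measurable_fun setT y ->
  (forall t, (x t, y t) \in XY) ->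
  0 < lambda_min (Exx P x) ->
  (0 < \int[P]_t ((y t) ^+ 2)%:E)%E ->
  0 < la -> 0 < ua -> 0 < lb -> 0 < ub ->
  (forall th' z, th' \in Theta -> z \in XY ->
     la <= dotv th'.1 z.1 <= ua /\ lb <= - (th'.2 * z.2) <= ub) ->
  0 < ymin -> (forall z, z \in XY -> ymin <= `|z.2|) ->
  (* offline data *)
  (forall n, (xh n, yh n) \in XY) ->
  (* Assumption 2 *)
  0 < c -> c * N%:R <= lambda_min (Sigma_hat xh) ->
  ((\sum_(n < N) (p_hat xh yh ph (xh n) (yh n) - pstar th (xh n) (yh n)) ^+ 2)%:E
   <= ((N%:R * xmax ^+ 2 * ymax ^+ 2) / (ymin ^+ 2 * lambda_min (Exx P x)))%:E
      * \int[P]_t ((p_hat xh yh ph (x t) (y t) - pstar th (x t) (y t)) ^+ 2)%:E)%E.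
Proof.
move=> _ _ _ _ XY_bound x_measurable y_measurable xy_XY lam_gt0 _ _ _ _ _ _
  ymin_gt0 ymin_le xh_XY _ _.
set lam := lambda_min (Exx P x); set K := _ / (ymin ^+ 2 * lam).
set w := (A_hat xh yh ph)^T + (2 * th.2)^-1 *: th.1.
have ymin2_gt0 : 0 < ymin ^+ 2 by rewrite exprn_gt0.
have y_sq z : z \in XY -> ymin ^+ 2 <= z.2 ^+ 2 /\ z.2 ^+ 2 <= ymax ^+ 2.
  move=> zXY; split; first exact: sqr_le_of_le_norm (ltW ymin_gt0) (ymin_le z zXY).
  exact/sqr_le_of_norm_le/(XY_bound z zXY).2.
have y2_gt0 t : 0 < y t ^+ 2 := lt_le_trans ymin2_gt0 (y_sq _ (xy_XY t)).1.
have [t0 _] := probability_inhabited P.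
have ymax2_gt0 : 0 < ymax ^+ 2 := lt_le_trans (y2_gt0 t0) (y_sq _ (xy_XY t0)).2.
have x_coord t i : `|x t 0 i| <= xmax.
  exact: le_trans (norm_coord_le_enorm _ i) (XY_bound _ (xy_XY t)).1.
have sample_bound := sum_sqr_dotv_div_le w
  (fun n => dotv_le_sqr_enorm (XY_bound _ (xh_XY n)).1) ymin2_gt0
  (fun n => (y_sq _ (xh_XY n)).1).
have population_bound := lambda_min_Exx_le_integral_div P x_measurable x_coord w
  y_measurable ymax2_gt0 y2_gt0 (fun t => (y_sq _ (xy_XY t)).2).
under eq_bigr do rewrite p_hat_sub_pstar; under eq_integral do rewrite p_hat_sub_pstar.
have K_ge0 : 0 <= K.
  apply: divr_ge0; last exact: mulr_ge0 (sqr_ge0 _) (ltW lam_gt0).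
  by rewrite -mulrA mulr_ge0 ?ler0n // mulr_ge0 ?sqr_ge0.
apply: le_trans (lee_wpmul2l _ population_bound); last by rewrite lee_fin.
rewrite -EFinM lee_fin; apply: le_trans sample_bound _.
suff -> : K * ((ymax ^+ 2)^-1 * (lam * dotv w w))
          = N%:R * (dotv w w * xmax ^+ 2 / ymin ^+ 2) by [].
have ymax_neq0 : ymax != 0 by rewrite -sqrf_eq0 gt_eqF.
by rewrite /K; field; rewrite gt_eqF //= ymax_neq0; exact: lt0r_neq0 lam_gt0.
Qed.
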